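(* Let $L/K$ be a Galois extension of number fields with Galois group $G=\{\sigma_{g_1},\dots,\sigma_{g_n}\}$ and $R\subseteq S$ the rings of integers. For $1\le l\le n$ let $I_{g_l}=\{\sigma_{g_l},\dots,\sigma_{g_n}\}$, $P_l=(S\otimes_RS)/(S\otimes_RS)_{I_{g_l}^c}$, and $P=P_1\oplus\cdots\oplus P_n$. Let $\mathcal{R}$ be the set of $n\times n$ matrices over $S\otimes_RS$ whose $(i,j)$ entry lies in $(S\otimes_RS)_{I_{g_i}\cup I_{g_j}^c}$, and $\mathcal{I}$ the set of $n\times n$ matrices whose $(i,j)$ entry lies in $(S\otimes_RS)_{I_{g_j}^c}$. Then $\mathcal{R}$ is a subring of $M_n(S\otimes_RS)$, $\mathcal{I}$ is a two-sided ideal of $\mathcal{R}$, and there is an isomorphism of $S\otimes_RS$-algebras $$\operatorname{End}_{S\otimes_RS}(P)^{op}\cong\mathcal{R}/\mathcal{I}.$$ Furthermore the natural map $S\otimes_RS\to\operatorname{Cen}(\operatorname{End}_{S\otimes_RS}(P))$, $x\mapsto(p\mapsto xp)$, is an isomorphism, so $S\otimes_RS\cong\operatorname{Cen}(\operatorname{End}_{S\otimes_RS}(P)^{op})$.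
   Context: $\phi_{g_k}:L\otimes_KL\to L$ is $l_1\otimes l_2\mapsto\sigma_{g_k}(l_1)l_2$, with $S\otimes_RS$ regarded as a subring of $L\otimes_KL$. For $I\subseteq G$, $(S\otimes_RS)_I=\{x\in S\otimes_RS:\phi_{g_k}(x)=0$ for all $k$ with $\sigma_{g_k}\notin I\}$; $I^c=G\setminus I$. $\operatorname{Cen}$ denotes the center. *)

From HB Require Import structures.
From mathcomp Require Import all_boot all_order all_algebra all_fingroup all_field.
Set Implicit Arguments. Unset Strict Implicit. Unset Printing Implicit Defensive.
Import GRing.Theory.
Local Open Scope ring_scope.

Definition is_algint (F : fieldType) (x : F) : Prop :=
  exists p : {poly int}, p \is monic /\ root (map_poly (fun z : int => z%:~R) p) x.

Definition in_ringOfIntegers (M : fieldExtType rat) (E : {subfield M}) (x : M) : Prop :=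
  x \in E /\ is_algint x.

Section TensorModel.
Variables (M : splittingFieldType rat) (K L : {subfield M}) (n : nat)
          (g : 'I_n -> gal_of L).

(* Coordinates of L (x)_K L under  l1 (x) l2 |-> (phi_{g_k}(l1 (x) l2))_k
   = (sigma_{g_k}(l1) l2)_k, i.e. the product of the maps phi_{g_k}. *)
Definition TV := {ffun 'I_n -> M}.
Definition tens (a b : M) : TV := [ffun k => (g k : 'AEnd(M)) a * b].

(* S (x)_R S, regarded inside L (x)_K L (= its image under (phi_{g_k})_k) *)
Definition inSS (x : TV) : Prop :=
  exists s : seq (M * M),
    (forall p, p \in s -> in_ringOfIntegers L p.1 /\ in_ringOfIntegers L p.2) /\
    x = \sum_(p <- s) tens p.1 p.2.

Definition inSS_I (I : {set gal_of L}) (x : TV) : Prop :=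
  inSS x /\ forall k : 'I_n, g k \notin I -> x k = 0.

Definition Ig (l : 'I_n) : {set gal_of L} := g @: [set k : 'I_n | (l <= k)%N].
Definition Gc (I : {set gal_of L}) : {set gal_of L} := ('Gal(L / K) :\: I)%g.

(* P = P_1 (+) ... (+) P_n, P_l = (S(x)S)/(S(x)S)_{I_{g_l}^c};
   elements represented by tuples of representatives. *)
Definition PV := {ffun 'I_n -> TV}.
Definition Prep (p : PV) : Prop := forall l, inSS (p l).
Definition Peq (p q : PV) : Prop := forall l, inSS_I (Gc (Ig l)) (p l - q l).
Definition smul (x : TV) (p : PV) : PV := [ffun l => x * p l].

Definition isEnd (f : PV -> PV) : Prop :=
  [/\ forall p, Prep p -> Prep (f p),
      forall p q, Prep p -> Prep q -> Peq p q -> Peq (f p) (f q),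
      forall p q, Prep p -> Prep q -> Peq (f (p + q)) (f p + f q)
    & forall x p, inSS x -> Prep p -> Peq (f (smul x p)) (smul x (f p))].
Definition EndEq (f f' : PV -> PV) : Prop := forall p, Prep p -> Peq (f p) (f' p).

Definition inRmat (A : 'M[TV]_n) : Prop :=
  forall i j, inSS_I (Ig i :|: Gc (Ig j)) (A i j).
Definition inImat (A : 'M[TV]_n) : Prop :=
  forall i j, inSS_I (Gc (Ig j)) (A i j).

End TensorModel.

(* Identify S (x)_R S with its image in L^n under l1 (x) l2 |-> (g_k(l1) l2)_k.
   Then (S (x)_R S)_I is the set of elements vanishing at the coordinates k
   with g_k outside I, and (S (x)_R S)_I (S (x)_R S)_J lies in
   (S (x)_R S)_(I :&: J); with this, the ring and ideal properties of calR and
   calI reduce to the inclusion (Z u (G - X)) n (X u (G - Y)) <= Z u (G - Y).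
   Linearity forces an endomorphism f of P to agree, modulo the relations of P,
   with the right multiplication by its matrix (f(e_i)_j)_ij. That this matrix
   lies in calR comes from elements of S (x)_R S supported at one coordinate:
   products of c (x) 1 - 1 (x) g_j(c) over algebraic integers c separating g_j
   from g_k. Commuting with the matrix units makes a central f scalar. *)

From HB Require Import structures.
From mathcomp Require Import all_boot all_order all_algebra all_fingroup all_field.
From Stdlib Require Import Classical.
Import GRing.Theory Num.Theory.
Local Open Scope ring_scope.

Lemma algintE (F : fieldType) (x : F) :
  is_algint x <-> integralOver (intr : {rmorphism int -> F}) x.
Proof. by split=> -[p]; [case=> *|move=> *]; exists p. Qed.

Lemma algintN (F : fieldType) (x : F) : is_algint x -> is_algint (- x).
Proof. by move/algintE/integral_opp/algintE. Qed.

Lemma algintM (F : fieldType) (x y : F) :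
  is_algint x -> is_algint y -> is_algint (x * y).
Proof. by move=> /algintE x_int /algintE y_int; apply/algintE/integral_mul. Qed.

Lemma algint1 (F : fieldType) : is_algint (1 : F).
Proof. exact/algintE/integral1. Qed.

Lemma algint_rmorph (F E : fieldType) (f : {rmorphism F -> E}) (x : F) :
  is_algint x -> is_algint (f x).
Proof.
case=> p [p_monic px0]; exists p; split=> //.
rewrite (_ : map_poly _ p = map_poly f (map_poly (fun z : int => z%:~R : F) p)).
  by rewrite rmorph_root.
by rewrite -map_poly_comp; apply: eq_map_poly => z /=; rewrite rmorph_int.
Qed.

Lemma horner_scaled_coef (F : fieldType) (A : comAlgType F) (q : {poly F})
    (d : F) (a : A) :
  (\poly_(i < size q) (d ^+ ((size q).-1 - i) * q`_i)%:A).[d *: a] =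
  d ^+ (size q).-1 *: (map_poly (in_alg A) q).[a].
Proof.
rewrite (horner_coef_wide _ (size_poly _ _)) horner_coef size_map_poly scaler_sumr.
apply: eq_bigr => -[i /= ltiq] _.
rewrite coef_poly ltiq coef_map /= !mulr_algl exprZn !scalerA mulrAC -exprD subnK //.
by rewrite -ltnS prednK // (leq_ltn_trans _ ltiq).
Qed.

Lemma prod_denq_mul_int (s : seq rat) x :
  x \in s -> (\prod_(c <- s) (denq c)%:~R) * x \is a Num.int.
Proof.
move=> xs; rewrite (big_rem x xs) /= mulrAC [_ * x]mulrC -numqE.
by apply: rpredM; [apply: intr_int | apply: rpred_prod => c _; apply: intr_int].
Qed.

(* Clearing the denominators [d] of the monic rational minimal polynomial [q]
   of [a]: [d *: a] is a root of [\sum_i d ^+ (m - i) q_i X ^ i], which is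
   monic with integer coefficients. *)
Lemma algint_rat_multiple (M : fieldExtType rat) (a : M) :
  exists2 d : rat, d != 0 & is_algint (d *: a).
Proof.
have /polyOver1P [q def_q] := minPolyOver 1%AS a.
have q_monic : q \is monic by rewrite -(map_monic (in_alg M)) -def_q monic_minPoly.
have qa0 : root (map_poly (in_alg M) q) a by rewrite -def_q root_minPoly.
set d : rat := \prod_(c <- q) (denq c)%:~R.
have d_neq0 : d != 0.
  by rewrite prodf_seq_neq0; apply/allP => c _; rewrite intr_eq0 denq_neq0.
set m := (size q).-1.
have q_gt0 : (0 < size q)%N by rewrite size_poly_gt0 monic_neq0.
have qm1 : q`_m = 1 by move/monicP: q_monic; rewrite lead_coefE.
pose c i := d ^+ (m - i) * q`_i.
have cm1 : c m = 1 by rewrite /c subnn qm1 mulr1.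
have c_int i : (i < size q)%N -> c i \is a Num.int.
  move=> ltiq; have [ltim|leim] := ltnP i m.
    rewrite /c -(subnSK ltim) exprSr -mulrA; apply: rpredM.
      by apply/rpredX/rpred_prod => y _; apply: intr_int.
    by apply: prod_denq_mul_int; apply: mem_nth.
  have -> : i = m by apply/eqP; rewrite eqn_leq leim andbT -ltnS prednK.
  by rewrite cm1 rpred1.
exists d => //; apply/algintE.
apply: (@integral_root_monic _ _ _ _ (\poly_(i < size q) (c i)%:A)).
- rewrite monicE lead_coefE size_poly_eq; last by rewrite cm1 scale1r oner_neq0.
  by rewrite coef_poly ltn_predL q_gt0 cm1 scale1r.
- by rewrite /root horner_scaled_coef (rootP qa0) scaler0.
apply/integral_poly => i; rewrite coef_poly.
case: ifP => [ltiq|_]; last exact: integral0.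
by rewrite -[c i](floorK (c_int _ ltiq)) scaler_int; apply: integral_id.
Qed.

Section RingOfIntegers.
Variables (M : fieldExtType rat) (E : {subfield M}).

Lemma ringOfIntegersN a : in_ringOfIntegers E a -> in_ringOfIntegers E (- a).
Proof. by case=> aE a_int; split; [rewrite rpredN | apply: algintN]. Qed.

Lemma ringOfIntegersM a b :
  in_ringOfIntegers E a -> in_ringOfIntegers E b -> in_ringOfIntegers E (a * b).
Proof. by case=> aE a_int [bE b_int]; split; [rewrite rpredM | apply: algintM]. Qed.

Lemma ringOfIntegers1 : in_ringOfIntegers E 1.
Proof. by split; [rewrite mem1v | apply: algint1]. Qed.

End RingOfIntegers.

Section GaloisRingOfIntegers.
Variables (M : splittingFieldType rat) (L : {subfield M}).

Lemma ringOfIntegers_gal (s : gal_of L) a :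
  in_ringOfIntegers L a -> in_ringOfIntegers L (s a).
Proof. by case=> aL a_int; split; [rewrite memv_gal | apply: algint_rmorph]. Qed.

Lemma gal_neq_ringOfIntegers (s t : gal_of L) :
  s != t -> exists2 c, in_ringOfIntegers L c & s c != t c.
Proof.
move=> /eqP s_neq_t.
have [a aL sa_neq_ta] : exists2 a, a \in L & s a != t a.
  apply: NNPP => none; apply/s_neq_t/eqP/gal_eqP => a aL.
  by apply/eqP/negPn/negP => ne; apply: none; exists a.
have [d d_neq0 da_int] := algint_rat_multiple _ a.
exists (d *: a); first by split; rewrite ?memvZ.
by rewrite !linearZ /=; apply: contra sa_neq_ta => /eqP/(scalerI d_neq0)->.
Qed.

End GaloisRingOfIntegers.

Lemma ffun_mulC (aT : finType) (R : comPzRingType) (x y : {ffun aT -> R}) :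
  x * y = y * x.
Proof. by apply/ffunP => k; rewrite !ffunE mulrC. Qed.

Lemma prod_ffunE (aT : finType) (R : pzSemiRingType) (I : Type) (r : seq I)
    (P : pred I) (F : I -> {ffun aT -> R}) x :
  (\prod_(i <- r | P i) F i) x = \prod_(i <- r | P i) F i x.
Proof. by elim/big_rec2: _ => // [|i _ y _ <-]; rewrite !ffunE. Qed.

Lemma setUD_chain {T : finType} (G X Y Z : {set T}) :
  (Z :|: G :\: X) :&: (X :|: G :\: Y) \subset Z :|: G :\: Y.
Proof. by apply/subsetP => s; rewrite !inE; do 4!case: (_ \in _). Qed.

Lemma setDI_chain {T : finType} (G X Y : {set T}) :
  (G :\: X) :&: (X :|: G :\: Y) \subset G :\: Y.
Proof. by have := setUD_chain G X Y (set0 : {set T}); rewrite !set0U. Qed.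

Section TensorProduct.
Variables (M : splittingFieldType rat) (K L : {subfield M}) (n : nat)
          (g : 'I_n -> gal_of L).

Local Notation TV := (TV M n).
Local Notation PV := (PV M n).
Local Notation SS := (inSS g).
Local Notation SSI := (inSS_I g).
Local Notation Peq := (Peq K g).
Local Notation Prep := (Prep g).

Lemma inSS0 : SS 0.
Proof. by exists [::]; rewrite big_nil. Qed.

Lemma inSS_tens a b :
  in_ringOfIntegers L a -> in_ringOfIntegers L b -> SS (tens g a b).
Proof.
move=> aS bS; exists [:: (a, b)]; rewrite big_seq1; split=> // p.
by rewrite inE => /eqP ->.
Qed.

Lemma tens11 : tens g 1 1 = 1.
Proof. by apply/ffunP => k; rewrite !ffunE rmorph1 mulr1. Qed.

Lemma inSS1 : SS 1.
Proof. by rewrite -tens11; apply: inSS_tens; apply: ringOfIntegers1. Qed.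

Lemma inSSD x y : SS x -> SS y -> SS (x + y).
Proof.
case=> s [sS ->] [t [tS ->]]; exists (s ++ t); rewrite big_cat; split=> // p.
by rewrite mem_cat => /orP[/sS|/tS].
Qed.

Lemma tensNl a b : tens g (- a) b = - tens g a b.
Proof. by apply/ffunP => k; rewrite !ffunE rmorphN mulNr. Qed.

Lemma inSSN x : SS x -> SS (- x).
Proof.
case=> s [sS ->]; exists [seq (- p.1, p.2) | p <- s]; split.
  by move=> _ /mapP[p /sS[p1S p2S] ->]; split=> //; apply: ringOfIntegersN.
by rewrite big_map -sumrN; apply: eq_bigr => p _; rewrite tensNl.
Qed.

Lemma inSSB x y : SS x -> SS y -> SS (x - y).
Proof. by move=> xS yS; apply/inSSD/inSSN. Qed.

Lemma inSS_sum (I : Type) (r : seq I) (P : pred I) (F : I -> TV) :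
  (forall i, P i -> SS (F i)) -> SS (\sum_(i <- r | P i) F i).
Proof. by move=> FS; apply: big_ind => //; [apply: inSS0 | apply: inSSD]. Qed.

Lemma tensM a b c d : tens g a b * tens g c d = tens g (a * c) (b * d).
Proof. by apply/ffunP => k; rewrite !ffunE rmorphM mulrACA. Qed.

Lemma inSSM x y : SS x -> SS y -> SS (x * y).
Proof.
case=> s [sS ->] [t [tS ->]]; rewrite mulr_suml big_seq.
apply: inSS_sum => p ps; rewrite mulr_sumr big_seq; apply: inSS_sum => q qt.
have [p1S p2S] := sS p ps; have [q1S q2S] := tS q qt.
by rewrite tensM; apply: inSS_tens; apply: ringOfIntegersM.
Qed.

Lemma inSS_prod (I : Type) (r : seq I) (P : pred I) (F : I -> TV) :
  (forall i, P i -> SS (F i)) -> SS (\prod_(i <- r | P i) F i).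
Proof. by move=> FS; apply: big_ind => //; [apply: inSS1 | apply: inSSM]. Qed.

Lemma inSS_I0 I : SSI I 0.
Proof. by split=> [|k _]; [apply: inSS0 | rewrite ffunE]. Qed.

Lemma inSS_ID I x y : SSI I x -> SSI I y -> SSI I (x + y).
Proof.
by case=> xS x0 [yS y0]; split=> [|k kI]; [apply: inSSD | rewrite ffunE x0 ?y0 ?addr0].
Qed.

Lemma inSS_IN I x : SSI I x -> SSI I (- x).
Proof. by case=> xS x0; split=> [|k kI]; [apply: inSSN | rewrite ffunE x0 ?oppr0]. Qed.

Lemma inSS_IB I x y : SSI I x -> SSI I y -> SSI I (x - y).
Proof. by move=> xI yI; apply/inSS_ID/inSS_IN. Qed.

Lemma inSS_I_sum I (J : Type) (r : seq J) (P : pred J) (F : J -> TV) :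
  (forall j, P j -> SSI I (F j)) -> SSI I (\sum_(j <- r | P j) F j).
Proof. by move=> FI; apply: big_ind => //; [apply: inSS_I0 | apply: inSS_ID]. Qed.

Lemma inSS_IM {I J x y} : SSI I x -> SSI J y -> SSI (I :&: J) (x * y).
Proof.
case=> xS x0 [yS y0]; split=> [|k]; first exact: inSSM.
by rewrite inE negb_and ffunE => /orP[/x0->|/y0->]; rewrite ?mul0r ?mulr0.
Qed.

Lemma inSS_IMl {I x y} : SS x -> SSI I y -> SSI I (x * y).
Proof.
by move=> xS [yS y0]; split=> [|k /y0 yk0]; [apply: inSSM | rewrite ffunE yk0 mulr0].
Qed.

Lemma inSS_I_subset {I J : {set gal_of L}} {x} : I \subset J -> SSI I x -> SSI J x.
Proof.
move=> /subsetP IJ [xS x0]; split=> // k; apply: contraNeq => xk_neq0.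
by apply: IJ; apply: contraR xk_neq0 => /x0 ->.
Qed.

Lemma Prep0 : Prep 0.
Proof. by move=> l; rewrite ffunE; apply: inSS0. Qed.

Lemma PrepD p q : Prep p -> Prep q -> Prep (p + q).
Proof. by move=> pS qS l; rewrite ffunE; apply: inSSD. Qed.

Lemma Prep_sum {I : Type} {r : seq I} {P : pred I} {F : I -> PV} :
  (forall i, P i -> Prep (F i)) -> Prep (\sum_(i <- r | P i) F i).
Proof. by move=> FS; apply: big_ind => //; [apply: Prep0 | apply: PrepD]. Qed.

Lemma Prep_smul {x p} : SS x -> Prep p -> Prep (smul x p).
Proof. by move=> xS pS l; rewrite ffunE; apply: inSSM. Qed.

Lemma eq_Peq {p q : PV} : p = q -> Peq p q.
Proof. by move=> -> l; rewrite subrr; apply: inSS_I0. Qed.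

Lemma Peq_sym {p q : PV} : Peq p q -> Peq q p.
Proof. by move=> pq l; rewrite -opprB; apply: inSS_IN. Qed.

Lemma Peq_trans {p q r : PV} : Peq p q -> Peq q r -> Peq p r.
Proof. by move=> pq qr l; rewrite -(subrKA (q l)); apply: inSS_ID. Qed.

Lemma PeqD {p q p' q' : PV} : Peq p q -> Peq p' q' -> Peq (p + p') (q + q').
Proof. by move=> pq pq' l; rewrite !ffunE opprD addrACA; apply: inSS_ID. Qed.

Lemma Peq_sum {I : Type} {r : seq I} {P : pred I} {F G : I -> PV} :
  (forall i, P i -> Peq (F i) (G i)) ->
  Peq (\sum_(i <- r | P i) F i) (\sum_(i <- r | P i) G i).
Proof.
by move=> FG; apply: (big_ind2 Peq) => //; [apply: eq_Peq | move=> *; apply: PeqD].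
Qed.

Definition unit_pv (i : 'I_n) : PV := [ffun l => (l == i)%:R].

(* The row vector [p] multiplied by [A] on the right; this reverses
   composition, whence the opposite ring in [End(P)^op ~ calR / calI]. *)
Definition mx_end (A : 'M[TV]_n) (p : PV) : PV := [ffun j => \sum_i p i * A i j].

Definition end_mx (f : PV -> PV) : 'M[TV]_n := \matrix_(i, j) f (unit_pv i) j.

Lemma inSS_nat (b : bool) : SS b%:R.
Proof. by case: b; [apply: inSS1 | apply: inSS0]. Qed.

Lemma Prep_unit_pv i : Prep (unit_pv i).
Proof. by move=> l; rewrite ffunE; apply: inSS_nat. Qed.

Lemma pv_decomp (p : PV) : p = \sum_i smul (p i) (unit_pv i).
Proof.
apply/ffunP => l; rewrite sum_ffunE (bigD1 l) //= !ffunE eqxx mulr1 big1 ?addr0 //.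
by move=> i il; rewrite !ffunE eq_sym (negbTE il) mulr0.
Qed.

Lemma mx_end_unit A i j : mx_end A (unit_pv i) j = A i j.
Proof.
rewrite ffunE (bigD1 i) //= ffunE eqxx mul1r big1 ?addr0 // => k ki.
by rewrite ffunE (negbTE ki) mul0r.
Qed.

Lemma mx_endK A : end_mx (mx_end A) = A.
Proof. by apply/matrixP => i j; rewrite mxE mx_end_unit. Qed.

Lemma mx_end_delta_at a b p : mx_end (delta_mx a b) p b = p a.
Proof.
rewrite ffunE (bigD1 a) //= mxE !eqxx mulr1 big1 ?addr0 // => i ia.
by rewrite mxE (negbTE ia) mulr0.
Qed.

Lemma mx_end_delta_unit a b i :
  mx_end (delta_mx a b) (unit_pv i) = if i == a then unit_pv b else 0.
Proof. by apply/ffunP => j; rewrite mx_end_unit mxE; case: eqP; rewrite ffunE. Qed.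

Section Endomorphism.
Context {f : PV -> PV} (f_end : isEnd K g f).

Lemma end_Prep p : Prep p -> Prep (f p).
Proof. by case: f_end => f_Prep _ _ _; apply: f_Prep. Qed.

Lemma end_Peq {p q} : Prep p -> Prep q -> Peq p q -> Peq (f p) (f q).
Proof. by case: f_end => _ f_Peq _ _; apply: f_Peq. Qed.

Lemma endD {p q} : Prep p -> Prep q -> Peq (f (p + q)) (f p + f q).
Proof. by case: f_end => _ _ fD _; apply: fD. Qed.

Lemma endZ {x p} : SS x -> Prep p -> Peq (f (smul x p)) (smul x (f p)).
Proof. by case: f_end => _ _ _ fZ; apply: fZ. Qed.

Lemma end0 : Peq (f 0) 0.
Proof.
move=> l; have := endD Prep0 Prep0 l.
by rewrite addr0 !ffunE subr0 opprD addrA subrr sub0r => /inSS_IN; rewrite opprK.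
Qed.

Lemma end_sum {I : Type} {r : seq I} {P : pred I} {F : I -> PV} :
  (forall i, P i -> Prep (F i)) ->
  Peq (f (\sum_(i <- r | P i) F i)) (\sum_(i <- r | P i) f (F i)).
Proof.
move=> FS; elim: r => [|i r IHr]; first by rewrite !big_nil; apply: end0.
rewrite !big_cons; case: ifP => Pi //.
apply: Peq_trans (endD (FS i Pi) (Prep_sum FS)) _.
by apply: PeqD IHr; apply: eq_Peq.
Qed.

Lemma end_mxE p : Prep p -> Peq (f p) (mx_end (end_mx f) p).
Proof.
move=> pS; rewrite {1}(pv_decomp p).
apply: Peq_trans (end_sum (fun i _ => Prep_smul (pS i) (Prep_unit_pv i))) _.
apply: Peq_trans (Peq_sum (fun i _ => endZ (pS i) (Prep_unit_pv i))) _.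
apply: eq_Peq; apply/ffunP => j; rewrite sum_ffunE ffunE.
by apply: eq_bigr => i _; rewrite !ffunE mxE.
Qed.

End Endomorphism.

Lemma isEnd_mx_end A : inRmat K g A -> isEnd K g (mx_end A).
Proof.
move=> A_R; split.
- move=> p pS l; rewrite ffunE; apply: inSS_sum => i _.
  by apply: inSSM => //; case: (A_R i l).
- move=> p q _ _ pq j.
  have -> : mx_end A p j - mx_end A q j = \sum_i (p i - q i) * A i j.
    by rewrite !ffunE -sumrB; apply: eq_bigr => i _; rewrite mulrBl.
  apply: inSS_I_sum => i _.
  by apply: inSS_I_subset (setDI_chain _ _ _) (inSS_IM (pq i) (A_R i j)).
- move=> p q _ _; apply: eq_Peq; apply/ffunP => j.
  by rewrite !ffunE -big_split; apply: eq_bigr => i _; rewrite !ffunE mulrDl.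
- move=> x p _ _; apply: eq_Peq; apply/ffunP => j.
  by rewrite !ffunE mulr_sumr; apply: eq_bigr => i _; rewrite !ffunE mulrA.
Qed.

Lemma isEnd_smul x : SS x -> isEnd K g (smul x).
Proof.
move=> xS; split.
- by move=> p; apply: Prep_smul.
- by move=> p q _ _ pq l; rewrite !ffunE -mulrBr; apply: inSS_IMl.
- by move=> p q _ _; apply: eq_Peq; apply/ffunP => l; rewrite !ffunE mulrDr.
- move=> y p _ _; apply: eq_Peq; apply/ffunP => l.
  by rewrite !ffunE !mulrA [x * y]ffun_mulC.
Qed.

Lemma inImat0 : inImat K g 0.
Proof. by move=> i j; rewrite mxE; apply: inSS_I0. Qed.

Lemma Imat_ideal :
  [/\ forall A, inImat K g A -> inRmat K g A,
      inImat K g 0,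
      forall A B, inImat K g A -> inImat K g B -> inImat K g (A - B)
    & forall A B, inRmat K g A -> inImat K g B ->
        inImat K g (A *m B) /\ inImat K g (B *m A)].
Proof.
split=> [A A_I i j||A B A_I B_I i j|A B A_R B_I].
- exact: inSS_I_subset (subsetUr _ _) (A_I i j).
- exact: inImat0.
- by rewrite !mxE; apply: inSS_IB.
split=> i j; rewrite mxE; apply: inSS_I_sum => k _.
  exact: inSS_I_subset (subsetIr _ _) (inSS_IM (A_R i k) (B_I k j)).
exact: inSS_I_subset (setDI_chain _ _ _) (inSS_IM (B_I i k) (A_R k j)).
Qed.

Lemma g_in_Ig k : g k \in Ig g k.
Proof. by apply: imset_f; rewrite inE. Qed.

Lemma Ig_subset {a b : 'I_n} : (a <= b)%N -> Ig g b \subset Ig g a.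
Proof.
by move=> ab; apply: imsetS; apply/subsetP => k; rewrite !inE => /(leq_trans ab).
Qed.

Section GaloisIndexing.
Hypothesis g_inj : injective g.
Hypothesis g_in : forall k, g k \in 'Gal(L / K)%g.

(* The product over j != k of [c_j (x) 1 - 1 (x) g_j(c_j)], with [c_j] an
   algebraic integer on which [g_j] and [g_k] differ. *)
Lemma inSS_I_point k : exists2 z, SSI [set g k] z & z k != 0.
Proof.
have sep j : exists c, in_ringOfIntegers L c /\ (j != k -> g j c != g k c).
  have [->|jk] := eqVneq j k.
    by exists 1; split; [apply: ringOfIntegers1 | rewrite eqxx].
  have [c cS gjk] := gal_neq_ringOfIntegers _ _ _ _ (contra_neq (@g_inj j k) jk).
  by exists c.
have [c cP] := fin_all_exists sep.
pose z := \prod_(j | j != k) (tens g (c j) 1 - tens g 1 (g j (c j))).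
have zE k' : z k' = \prod_(j | j != k) (g k' (c j) - g j (c j)).
  by rewrite prod_ffunE; apply: eq_bigr => j _; rewrite !ffunE rmorph1 mulr1 mul1r.
exists z.
  split=> [|k']; last first.
    by rewrite inE (inj_eq g_inj) => k'k; rewrite zE (bigD1 k') //= subrr mul0r.
  apply: inSS_prod => j _; have [cS _] := cP j.
  apply: inSSB; apply: inSS_tens => //;
    by [apply: ringOfIntegers1 | apply: ringOfIntegers_gal].
by rewrite zE; apply/prodf_neq0 => j jk; rewrite subr_eq0 eq_sym; apply: (cP j).2.
Qed.

Lemma inSS_I1_Ig_Gc (a b : 'I_n) : (a <= b)%N -> SSI (Ig g a :|: Gc K (Ig g b)) 1.
Proof.
move=> ab; split=> [|k]; first exact: inSS1.
rewrite !inE g_in andbT => /norP[gk_a /negPn gk_b].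
by have := subsetP (Ig_subset ab) _ gk_b; rewrite (negbTE gk_a).
Qed.

Lemma inRmat1 : inRmat K g 1%:M.
Proof.
move=> i j; rewrite mxE; case: eqP => [<-|_]; last exact: inSS_I0.
exact: inSS_I1_Ig_Gc.
Qed.

Lemma inRmat_delta_mx {a b : 'I_n} : (a <= b)%N -> inRmat K g (delta_mx a b).
Proof.
move=> ab i j; rewrite mxE; case: andP => [[/eqP-> /eqP->]|_]; last exact: inSS_I0.
exact: inSS_I1_Ig_Gc.
Qed.

(* If [g k] lies neither in [I_{g_i}] nor in the complement of [I_{g_j}], a
   multiple [z e_i] of the i-th unit vector supported at [k] vanishes in [P],
   hence so does [z f(e_i)], which forces [f(e_i)_j] to vanish at [k]. *)
Lemma inRmat_end_mx f : isEnd K g f -> inRmat K g (end_mx f).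
Proof.
move=> f_end i j; rewrite mxE; split; first exact: end_Prep f_end _ (Prep_unit_pv i) j.
move=> k; rewrite inE negb_or => /andP[gk_i gk_j].
have [z z_k zk_neq0] := inSS_I_point k.
have z_i : SSI (Gc K (Ig g i)) z.
  by apply: inSS_I_subset z_k; rewrite sub1set inE gk_i g_in.
have ze_0 : Peq (smul z (unit_pv i)) 0.
  move=> l; rewrite !ffunE subr0; case: eqP => [->|_]; first by rewrite mulr1.
  by rewrite mulr0; apply: inSS_I0.
have zfe_0 : Peq (smul z (f (unit_pv i))) 0.
  apply: Peq_trans (Peq_sym (endZ f_end z_k.1 (Prep_unit_pv i))) _.
  apply: Peq_trans (end_Peq f_end (Prep_smul z_k.1 (Prep_unit_pv i)) Prep0 ze_0) _.
  exact: end0 f_end.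
have [_ /(_ k gk_j)] := zfe_0 j.
by rewrite !ffunE subr0 => /eqP; rewrite mulf_eq0 (negbTE zk_neq0) => /eqP.
Qed.

(* A central [f] commutes with the endomorphisms given by the matrix units:
   this kills the off-diagonal entries of its matrix modulo [calI] and makes
   all diagonal entries congruent to the first one. *)
Lemma end_central_smul f : isEnd K g f ->
    (forall f', isEnd K g f' -> EndEq K g (f \o f') (f' \o f)) ->
  exists x, SS x /\ EndEq K g f (smul x).
Proof.
move=> f_end f_central; have [n0|n_gt0] := posnP n.
  exists 0; split=> [|p _ l]; first exact: inSS0.
  by move: (ltn_ord l); rewrite [X in (_ < X)%N]n0.
set A := end_mx f; set j0 := Ordinal n_gt0.
have commute (a b i : 'I_n) : (a <= b)%N ->
    Peq (f (mx_end (delta_mx a b) (unit_pv i)))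
        (mx_end (delta_mx a b) (f (unit_pv i))).
  move=> ab; exact: f_central _ (isEnd_mx_end _ (inRmat_delta_mx ab)) _ (Prep_unit_pv i).
have off_diag i m : i != m -> SSI (Gc K (Ig g m)) (A i m).
  move=> im; have := commute m m i (leqnn m); rewrite mx_end_delta_unit (negbTE im).
  move/(Peq_trans (Peq_sym (end0 f_end)))/(_ m).
  by rewrite !(mx_end_delta_at, ffunE) sub0r mxE => /inSS_IN; rewrite opprK.
have diag j : SSI (Gc K (Ig g j)) (A j j - A j0 j0).
  have := commute j0 j j0 (leq0n j); rewrite mx_end_delta_unit eqxx => /(_ j).
  by rewrite mx_end_delta_at !mxE.
exists (A j0 j0); split=> [|p pS].
  by rewrite mxE; apply: end_Prep f_end _ (Prep_unit_pv j0) j0.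
apply: Peq_trans (end_mxE f_end _ pS) _ => l.
rewrite !ffunE (bigD1 l) //= addrAC [A j0 j0 * _]ffun_mulC -mulrBr.
apply: inSS_ID; first exact: inSS_IMl (diag l).
by apply: inSS_I_sum => i il; apply: inSS_IMl (off_diag i l il).
Qed.

Lemma Rmat_subring :
  [/\ inRmat K g 1%:M,
      forall A B, inRmat K g A -> inRmat K g B -> inRmat K g (A - B),
      forall A B, inRmat K g A -> inRmat K g B -> inRmat K g (A *m B)
    & forall A i j, inRmat K g A -> SS (A i j)].
Proof.
split=> [|A B A_R B_R i j|A B A_R B_R i j|A i j A_R]; first exact: inRmat1.
- by rewrite !mxE; apply: inSS_IB.
- rewrite mxE; apply: inSS_I_sum => k _.
  exact: inSS_I_subset (setUD_chain _ _ _ _) (inSS_IM (A_R i k) (B_R k j)).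
- exact: (A_R i j).1.
Qed.

Lemma end_mx_iso :
  exists Phi : (PV -> PV) -> 'M[TV]_n,
    (forall f, isEnd K g f -> inRmat K g (Phi f)) /\
    (forall f f', isEnd K g f -> isEnd K g f' ->
       (EndEq K g f f' <-> inImat K g (Phi f - Phi f'))) /\
    (forall A, inRmat K g A -> exists f, isEnd K g f /\ inImat K g (Phi f - A)) /\
    (forall f f', isEnd K g f -> isEnd K g f' ->
       inImat K g (Phi (fun p => f p + f' p) - (Phi f + Phi f'))) /\
    (forall f f', isEnd K g f -> isEnd K g f' ->
       inImat K g (Phi (f' \o f) - Phi f *m Phi f')) /\
    inImat K g (Phi id - 1%:M) /\
    (forall x f, SS x -> isEnd K g f ->
       inImat K g (Phi (fun p => smul x (f p)) - x%:M *m Phi f)).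
Proof.
exists end_mx; split; [|split; [|split; [|split; [|split; [|split]]]]].
- exact: inRmat_end_mx.
- move=> f f' f_end f'_end; split=> [ff' i j|ff'_I p pS].
    by rewrite !mxE; apply: ff' (Prep_unit_pv i) j.
  apply: Peq_trans (end_mxE f_end _ pS) _.
  apply: Peq_trans _ (Peq_sym (end_mxE f'_end _ pS)) => l.
  rewrite !ffunE -sumrB; apply: inSS_I_sum => i _.
  by rewrite -mulrBr; apply: inSS_IMl (pS i) _; move: (ff'_I i l); rewrite !mxE.
- move=> A A_R; exists (mx_end A); rewrite mx_endK subrr.
  by split; [apply: isEnd_mx_end | apply: inImat0].
- move=> f f' _ _.
  have -> : end_mx (fun p => f p + f' p) = end_mx f + end_mx f'.
    by apply/matrixP => i j; rewrite !mxE ffunE.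
  by rewrite subrr; apply: inImat0.
- move=> f f' f_end f'_end i j.
  rewrite !mxE; under eq_bigr do rewrite [end_mx f _ _]mxE.
  by have := end_mxE f'_end _ (end_Prep f_end _ (Prep_unit_pv i)) j; rewrite !ffunE.
- have -> : end_mx id = 1%:M by apply/matrixP => i j; rewrite !mxE ffunE eq_sym.
  by rewrite subrr; apply: inImat0.
- move=> x f _ _.
  have -> : end_mx (fun p => smul x (f p)) = x%:M *m end_mx f.
    by apply/matrixP => i j; rewrite mul_scalar_mx !mxE ffunE.
  by rewrite subrr; apply: inImat0.
Qed.

Lemma end_center :
  [/\ forall x, SS x ->
        isEnd K g (smul x) /\
        forall f, isEnd K g f -> EndEq K g (f \o smul x) (smul x \o f),
      forall x y, SS x -> SS y ->
        [/\ EndEq K g (smul (x * y)) (smul x \o smul y),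
            EndEq K g (smul (x + y)) (fun p => smul x p + smul y p)
          & EndEq K g (smul 1) id],
      forall x y, SS x -> SS y -> EndEq K g (smul x) (smul y) -> x = y
    & forall f, isEnd K g f ->
        (forall f', isEnd K g f' -> EndEq K g (f \o f') (f' \o f)) ->
        exists x, SS x /\ EndEq K g f (smul x)].
Proof.
split.
- move=> x xS; split=> [|f f_end p pS]; first exact: isEnd_smul.
  exact: (endZ f_end xS pS).
- move=> x y _ _; split=> p _; apply: eq_Peq; apply/ffunP => l.
  + by rewrite !ffunE mulrA.
  + by rewrite !ffunE mulrDl.
  + by rewrite !ffunE mul1r.
- move=> x y _ _ xy; apply/ffunP => k.
  have ones : Prep [ffun => 1] by move=> l; rewrite ffunE; apply: inSS1.
  have [_ /(_ k)] := xy _ ones k.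
  rewrite !inE g_in_Ig /= !ffunE !mulr1 => /(_ isT) /eqP.
  by rewrite subr_eq0 => /eqP.
- exact: end_central_smul.
Qed.

End GaloisIndexing.
End TensorProduct.

Theorem mainTheorem13 (M : splittingFieldType rat) (K L : {subfield M})
  (HKL : galois K L) (n : nat) (g : 'I_n -> gal_of L)
  (g_inj : injective g) (g_in : forall k, g k \in 'Gal(L / K)%g)
  (g_onto : forall s, s \in 'Gal(L / K)%g -> exists k, g k = s) :
  let R := inRmat K g in
  let I := inImat K g in
  let isE := isEnd K g in
  let Eq := EndEq K g in
  [/\ R 1%:M,
      forall A B, R A -> R B -> R (A - B),
      forall A B, R A -> R B -> R (A *m B)
    & forall A i j, R A -> inSS g (A i j)] /\
  [/\ forall A, I A -> R A,
      I 0,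
      forall A B, I A -> I B -> I (A - B)
    & forall A B, R A -> I B -> I (A *m B) /\ I (B *m A)] /\
  (exists Phi : (PV M n -> PV M n) -> 'M[TV M n]_n,
    (forall f, isE f -> R (Phi f)) /\
    (forall f f', isE f -> isE f' -> (Eq f f' <-> I (Phi f - Phi f'))) /\
    (forall A, R A -> exists f, isE f /\ I (Phi f - A)) /\
    (forall f f', isE f -> isE f' -> I (Phi (fun p => f p + f' p) - (Phi f + Phi f'))) /\
    (forall f f', isE f -> isE f' -> I (Phi (f' \o f) - Phi f *m Phi f')) /\
    I (Phi id - 1%:M) /\
    (forall x f, inSS g x -> isE f -> I (Phi (fun p => smul x (f p)) - x%:M *m Phi f))) /\
  [/\ forall x, inSS g x ->
        isE (smul x) /\ forall f, isE f -> Eq (f \o smul x) (smul x \o f),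
      forall x y, inSS g x -> inSS g y ->
        [/\ Eq (smul (x * y)) (smul x \o smul y),
            Eq (smul (x + y)) (fun p => smul x p + smul y p) & Eq (smul 1) id],
      forall x y, inSS g x -> inSS g y -> Eq (smul x) (smul y) -> x = y
    & forall f, isE f -> (forall f', isE f' -> Eq (f \o f') (f' \o f)) ->
        exists x, inSS g x /\ Eq f (smul x)].
Proof.
move=> R I isE Eq.
split; first exact: Rmat_subring.
split; first exact: Imat_ideal.
split; first exact: end_mx_iso.
exact: end_center.
Qed.
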